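(* For every instance of the Balancing with Conflicts game with $n$ players and $m$ machines: - the price of total anarchy is at most $2-\frac1m+\frac{m-1}{n}$ if $n\ge m$; - it is at most $1+\frac{2n-2}{m}$ if $n<m$; - it is at most $3-\frac2m$ for every $n$.
   Context: An instance of the Balancing with Conflicts (BwC) game consists of: - players $N=\{1,\dots,n\}$; - machines $M=\{1,\dots,m\}$; - a simple undirected graph $G=(N,E)$. Each player chooses one machine, so a state is $\vec s\in M^n$. Let $X_k(\vec s)=\{i:s_i=k\}$ and $x_k(\vec s)=|X_k(\vec s)|$. For $X\subseteq N$, $e(X)$ is the number of edges with both endpoints in $X$, and $e(\{i\},X)$ is the number of neighbours of $i$ in $X$. The cost of player $i$ with $s_i=k$ is $c_i(\vec s)=x_k(\vec s)+e(\{i\},X_k(\vec s))$. The social cost is $$c(\vec s)=\sum_ic_i(\vec s)=\sum_k\big(x_k(\vec s)^2+2e(X_k(\vec s))\big),$$ and $\vec s^*$ minimizes $c$. A coarse correlated equilibrium (CCE) is a probability distribution $\sigma$ over states such that for every player $i$ and every machine $s_i'$, $$\mathbf E_{\vec s\sim\sigma}[c_i(\vec s)]\le\mathbf E_{\vec s\sim\sigma}[c_i(s_i',\vec s_{-i})].$$ The price of total anarchy of an instance is the supremum over all CCE $\sigma$ of $\mathbf E_{\vec s\sim\sigma}[c(\vec s)]/c(\vec s^* )$. *)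

From HB Require Import structures.
From mathcomp Require Import all_boot all_order all_algebra.
Set Implicit Arguments. Unset Strict Implicit. Unset Printing Implicit Defensive.
Import Order.TTheory GRing.Theory Num.Theory.

Definition state (n m : nat) := {ffun 'I_n -> 'I_m}.

Definition simple_graph (n : nat) (G : rel 'I_n) : Prop :=
  symmetric G /\ irreflexive G.

Definition load (n m : nat) (s : state n m) (k : 'I_m) : nat :=
  #|[set j : 'I_n | s j == k]|.

Definition nbrs_on (n m : nat) (G : rel 'I_n) (s : state n m) (i : 'I_n) (k : 'I_m) : nat :=
  #|[set j : 'I_n | G i j && (s j == k)]|.

Definition player_cost (n m : nat) (G : rel 'I_n) (s : state n m) (i : 'I_n) : nat :=
  load s (s i) + nbrs_on G s i (s i).

Definition social_cost (n m : nat) (G : rel 'I_n) (s : state n m) : nat :=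
  \sum_(i < n) player_cost G s i.

Definition deviate (n m : nat) (s : state n m) (i : 'I_n) (k : 'I_m) : state n m :=
  [ffun j => if j == i then k else s j].

Local Open Scope ring_scope.

Definition is_distribution (R : realFieldType) (n m : nat)
    (sigma : {ffun state n m -> R}) : Prop :=
  (forall s, 0 <= sigma s) /\ \sum_(s : state n m) sigma s = 1.

Definition expect (R : realFieldType) (n m : nat)
    (sigma : {ffun state n m -> R}) (f : state n m -> nat) : R :=
  \sum_(s : state n m) sigma s * (f s)%:R.

Definition is_CCE (R : realFieldType) (n m : nat) (G : rel 'I_n)
    (sigma : {ffun state n m -> R}) : Prop :=
  is_distribution sigma /\
  forall (i : 'I_n) (k : 'I_m),
    expect sigma (fun s => player_cost G s i)
      <= expect sigma (fun s => player_cost G (deviate s i k) i).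

Definition is_optimum (n m : nat) (G : rel 'I_n) (sstar : state n m) : Prop :=
  forall s : state n m, (social_cost G sstar <= social_cost G s)%N.

(* "price of total anarchy <= b": the supremum over all CCE sigma of
   E_sigma[c] / c(sstar) is at most b, i.e. every such ratio is at most b. *)
Definition PoTA_le (R : realFieldType) (n m : nat) (G : rel 'I_n) (b : R) : Prop :=
  forall (sigma : {ffun state n m -> R}) (sstar : state n m),
    is_CCE G sigma -> is_optimum G sstar ->
    expect sigma (social_cost G) / (social_cost G sstar)%:R <= b.

From HB Require Import structures.
From mathcomp Require Import all_boot all_order all_algebra.
From mathcomp Require Import zify ring lra.
Import Order.TTheory GRing.Theory Num.Theory.
Set Implicit Arguments. Unset Strict Implicit.

(* Fix a CCE sigma and any state t.
   1. Smoothness from the CCE condition: summing the CCE inequality of player i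
      over all m deviations, the deviation costs add up to the constant
      n + m - 1 + deg i.  Hence m E[c] <= n (n + m - 1) + D, with D the sum
      of the degrees.
   2. Structure of t: c(t) = Q + N with Q = sum_k x_k^2 (loads) and N the number
      of ordered conflicting pairs sharing a machine; deg i + x_{t_i} <= e_i + n,
      where e_i counts the neighbours of i on its own machine, gives D + Q <= N + n^2, and Q >= n, m Q >= n^2 (Cauchy-Schwarz).
   Together: m E[c] <= n (2n + m - 1) + N - Q.  Any b that bounds E / (Q + N)
   for all reals satisfying these relations ("relaxed ratio bound") therefore
   bounds the price of total anarchy.  The three bounds of the theorem are then
   elementary real inequalities: two are proved directly, and 3 - 2/m dominates
   whichever of them applies. *)

Lemma card_set_indicator (T : finType) (P : pred T) :
  #|[set x | P x]| = \sum_x (P x : nat).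
Proof. by rewrite -sum1dep_card big_mkcond; apply: eq_bigr => x _; case: (P x). Qed.

Lemma sum_indicator_mul (T : finType) (a : T) (f : T -> nat) :
  \sum_k ((a == k) * f k) = f a.
Proof.
rewrite (bigD1 a) //= eqxx mul1n big1 ?addn0 // => k.
by rewrite eq_sym => /negbTE ->.
Qed.

Lemma sum_indicator (T : finType) (a : T) : \sum_k ((a == k) : nat) = 1.
Proof. by rewrite -(sum_indicator_mul a (fun=> 1)); apply: eq_bigr => k _; rewrite muln1. Qed.

Section Game.
Variables (n m : nat) (G : rel 'I_n).

Definition deg (i : 'I_n) : nat := #|[set j | G i j]|.

(* After player i moves to k, player j sits on machine k iff j = i or s_j = k. *)
Lemma deviate_occupancy (s : state n m) (i j : 'I_n) :
  \sum_(k < m) (deviate s i k j == k : nat) = if j == i then m else 1.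
Proof.
under eq_bigr => k _ do rewrite ffunE.
have [_ | _] := eqVneq j i; last exact: sum_indicator.
by under eq_bigr do rewrite eqxx; rewrite sum1_card card_ord.
Qed.

Lemma deviate_load_sum (s : state n m) (i : 'I_n) :
  \sum_(k < m) load (deviate s i k) k = n + m - 1.
Proof.
rewrite /load; under eq_bigr => k _ do rewrite card_set_indicator.
rewrite exchange_big /=; under eq_bigr => j _ do rewrite deviate_occupancy.
rewrite (bigD1 i) //= eqxx.
under eq_bigr => j /negbTE -> do [].
rewrite sum1_card cardC1 card_ord.
by have := ltn_ord i; lia.
Qed.

Lemma deviate_nbrs_sum (s : state n m) (i : 'I_n) :
  irreflexive G -> \sum_(k < m) nbrs_on G (deviate s i k) i k = deg i.
Proof.
move=> irrG; rewrite /nbrs_on.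
under eq_bigr => k _ do rewrite card_set_indicator.
rewrite /deg card_set_indicator.
rewrite exchange_big /=; apply: eq_bigr => j _.
under eq_bigr => k _ do rewrite ffunE.
have [->|ji] := eqVneq j i; first by rewrite irrG big1.
by case: (G i j); [exact: sum_indicator | rewrite big1].
Qed.

Lemma deviation_cost_sum (s : state n m) (i : 'I_n) :
  irreflexive G ->
  \sum_(k < m) player_cost G (deviate s i k) i = n + m - 1 + deg i.
Proof.
move=> irrG; rewrite big_split /=.
under eq_bigr => k _ do rewrite ffunE eqxx.
under [X in _ + X]eq_bigr => k _ do rewrite ffunE eqxx.
by rewrite deviate_load_sum deviate_nbrs_sum.
Qed.

Lemma load_sum (t : state n m) : \sum_(k < m) load t k = n.
Proof.
rewrite /load; under eq_bigr => k _ do rewrite card_set_indicator.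
rewrite exchange_big /=; under eq_bigr => i _ do rewrite sum_indicator.
by rewrite sum1_card card_ord.
Qed.

Lemma load_sqr_sum (t : state n m) :
  \sum_(i < n) load t (t i) = \sum_(k < m) load t k ^ 2.
Proof.
under eq_bigr => i _ do rewrite -(sum_indicator_mul (t i) (load t)).
rewrite exchange_big /=; apply: eq_bigr => k _.
by rewrite -mulnn {2}/load card_set_indicator big_distrl.
Qed.

Lemma load_own_pos (t : state n m) (i : 'I_n) : 0 < load t (t i).
Proof. by apply/card_gt0P; exists i; rewrite inE. Qed.

(* Every player j contributes [G i j] + [t_j = t_i] <= [both hold] + 1. *)
Lemma deg_load_le (t : state n m) (i : 'I_n) :
  deg i + load t (t i) <= nbrs_on G t i (t i) + n.
Proof.
have nE : n = \sum_(j < n) 1 by rewrite sum1_card card_ord.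
rewrite /deg /load /nbrs_on !card_set_indicator [X in _ <= _ + X]nE.
rewrite -!big_split /=; apply: leq_sum => j _.
by case: (G i j); case: (t j == t i).
Qed.

Lemma players_le_load_sum (t : state n m) : n <= \sum_(i < n) load t (t i).
Proof.
apply: leq_trans (_ : \sum_(i < n) 1 <= _); first by rewrite sum1_card card_ord.
by apply: leq_sum => i _; exact: load_own_pos.
Qed.

Lemma deg_sum_le (t : state n m) :
  \sum_(i < n) deg i + \sum_(i < n) load t (t i) <=
  \sum_(i < n) nbrs_on G t i (t i) + n * n.
Proof.
rewrite -big_split /=; apply: (@leq_trans (\sum_(i < n) (nbrs_on G t i (t i) + n))).
  by apply: leq_sum => i _; exact: deg_load_le.
by rewrite big_split sum_nat_const card_ord.
Qed.

Lemma social_cost_split (t : state n m) :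
  social_cost G t =
  \sum_(i < n) load t (t i) + \sum_(i < n) nbrs_on G t i (t i).
Proof. exact: big_split. Qed.

End Game.

Local Open Scope ring_scope.

Lemma expect_sum (R : realFieldType) (n m : nat) (sigma : {ffun state n m -> R})
    (I : finType) (f : I -> state n m -> nat) :
  expect sigma (fun s => \sum_(j : I) f j s)%N = \sum_(j : I) expect sigma (f j).
Proof.
rewrite /expect; under eq_bigr => s _ do rewrite natr_sum mulr_sumr.
exact: exchange_big.
Qed.

Lemma expect_const (R : realFieldType) (n m : nat) (sigma : {ffun state n m -> R})
    (c : nat) :
  is_distribution sigma -> expect sigma (fun=> c) = c%:R.
Proof. by case=> _ sum1; rewrite /expect -mulr_suml sum1 mul1r. Qed.

Lemma sum_sqr_le (R : realFieldType) (m : nat) (x : 'I_m -> R) :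
  (\sum_k x k) ^+ 2 <= m%:R * \sum_k x k ^+ 2.
Proof.
have amgm k l : 2 * (x k * x l) <= x k ^+ 2 + x l ^+ 2.
  by have := sqr_ge0 (x k - x l); rewrite sqrrB; lra.
have lhsE : \sum_k \sum_(l < m) 2 * (x k * x l) = 2 * (\sum_k x k) ^+ 2.
  rewrite expr2 big_distrl /= mulr_sumr; apply: eq_bigr => k _.
  by rewrite big_distrr /= mulr_sumr.
have rhsE : \sum_k \sum_(l < m) (x k ^+ 2 + x l ^+ 2) = 2 * (m%:R * \sum_k x k ^+ 2).
  under eq_bigr => k _ do rewrite big_split /= sumr_const card_ord.
  rewrite big_split /= sumr_const card_ord sumrMnl -mulr_natr; ring.
have : \sum_k \sum_(l < m) 2 * (x k * x l) <= \sum_k \sum_(l < m) (x k ^+ 2 + x l ^+ 2).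
  by apply: ler_sum => k _; apply: ler_sum => l _; exact: amgm.
by rewrite lhsE rhsE; lra.
Qed.

(* Smoothness: each player's CCE cost is at most the average of its deviation
   costs, so m E[c] <= sum_i (n + m - 1 + deg i). *)
Lemma cce_cost_bound (R : realFieldType) (n m : nat) (G : rel 'I_n)
    (sigma : {ffun state n m -> R}) :
  simple_graph G -> is_CCE G sigma ->
  m%:R * expect sigma (social_cost G) <= (\sum_(i < n) (n + m - 1 + deg G i))%N%:R.
Proof.
move=> [_ irrG] [distr cce].
rewrite (expect_sum sigma (fun i s => player_cost G s i)) mulr_sumr natr_sum.
apply: ler_sum => i _.
have -> : m%:R * expect sigma (fun s => player_cost G s i) =
    \sum_(k < m) expect sigma (fun s => player_cost G s i).
  by rewrite sumr_const card_ord mulr_natl.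
apply: le_trans (_ : _ <= \sum_(k < m) expect sigma (fun s => player_cost G (deviate s i k) i)) _.
  by apply: ler_sum => k _; exact: cce.
rewrite -(expect_sum sigma (fun k s => player_cost G (deviate s i k) i)).
rewrite -(expect_const _ distr) /expect.
by under eq_bigr => s _ do rewrite deviation_cost_sum //.
Qed.

(* The real relations between E = E[c], Q and N (with x = n, y = m) that the
   argument establishes; b is a relaxed ratio bound if it bounds E / (Q + N)
   under them. *)
Definition relaxed_ratio_bound (R : realFieldType) (x y b : R) : Prop :=
  forall E Q N : R, 0 <= N -> x <= Q -> x ^+ 2 <= y * Q ->
    y * E <= x * (2 * x + y - 1) + N - Q -> E / (Q + N) <= b.

(* The reduction: with E, Q, N read off a CCE and a state, the relations hold;
   the smoothness bound absorbs D through D + Q <= N + n^2. *)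
Lemma PoTA_le_of_relaxed (R : realFieldType) (n m : nat) (G : rel 'I_n) (b : R) :
  (0 < m)%N -> simple_graph G -> relaxed_ratio_bound n%:R m%:R b -> @PoTA_le R n m G b.
Proof.
move=> m_gt0 sG relb sigma t cce _.
pose Q := (\sum_(i < n) load t (t i))%N; pose N := (\sum_(i < n) nbrs_on G t i (t i))%N.
rewrite social_cost_split natrD; apply: relb; rewrite ?ler0n //.
- by rewrite ler_nat players_le_load_sum.
- have := sum_sqr_le (fun k : 'I_m => (load t k)%:R : R).
  rewrite -natr_sum load_sum /Q load_sqr_sum natr_sum.
  by under [in X in _ -> X]eq_bigr do rewrite natrX.
- have combine (x y D' Q' N' : R) : D' + Q' <= N' + x * x ->
      x * (x + y - 1) + D' <= x * (2 * x + y - 1) + N' - Q' by move=> ?; nra.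
  apply: le_trans (cce_cost_bound sG cce) _.
  rewrite big_split sum_nat_const card_ord /= natrD natrM natrB ?addn_gt0 ?m_gt0 ?orbT //.
  rewrite natrD; apply: combine.
  by move: (deg_sum_le G t); rewrite -(ler_nat R) !natrD natrM.
Qed.

Lemma relaxed_ratio_bound_mono (R : realFieldType) (x y b b' : R) :
  b <= b' -> relaxed_ratio_bound x y b -> relaxed_ratio_bound x y b'.
Proof. by move=> le_bb' relb E Q N *; apply: le_trans le_bb'; apply: relb. Qed.

Lemma ler_cross_div (R : realFieldType) (a b c d : R) :
  0 < b -> 0 < d -> a * d <= c * b -> a / b <= c / d.
Proof. by move=> b_gt0 d_gt0 h; rewrite ler_pdivrMr // mulrAC ler_pdivlMr. Qed.

(* The bound 2 - 1/m + (m - 1)/n: multiply the smoothness inequality by x and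
   use y Q >= x^2; the resulting coefficient of N is nonnegative. *)
Lemma relaxed_bound_many (R : realFieldType) (x y : R) :
  1 <= x -> 1 <= y -> relaxed_ratio_bound x y (2 - 1 / y + (y - 1) / x).
Proof.
move=> x_ge1 y_ge1 E Q N N_ge0 Q_ge Q_ge_sqr smooth.
have -> : 2 - 1 / y + (y - 1) / x = (2 * y * x - x + y * (y - 1)) / (y * x).
  by field; apply/andP; split; apply: lt0r_neq0; lra.
apply: ler_cross_div; [lra | by apply: mulr_gt0; lra |].
have h1 : 0 <= x * (x * (2 * x + y - 1) + N - Q - y * E) by apply: mulr_ge0; lra.
have h2 : 0 <= (2 * x + y - 1) * (y * Q - x ^+ 2) by apply: mulr_ge0; lra.
have h3 : 0 <= (y - 1) * (2 * x + y) * N by do 2 ?apply: mulr_ge0; lra.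
lra.
Qed.

(* The bound 1 + (2n - 2)/m: here Q >= x suffices. *)
Lemma relaxed_bound_few (R : realFieldType) (x y : R) :
  1 <= x -> 1 <= y -> relaxed_ratio_bound x y (1 + (2 * x - 2) / y).
Proof.
move=> x_ge1 y_ge1 E Q N N_ge0 Q_ge Q_ge_sqr smooth.
have -> : 1 + (2 * x - 2) / y = (y + 2 * x - 2) / y by field; apply: lt0r_neq0; lra.
apply: ler_cross_div; [lra | lra |].
have h1 : 0 <= (y + 2 * x - 1) * (Q - x) by apply: mulr_ge0; lra.
have h2 : 0 <= (y + 2 * x - 3) * N by apply: mulr_ge0; lra.
lra.
Qed.

(* When m <= n, (m - 1)/n <= (m - 1)/m, so the first bound is at most 3 - 2/m. *)
Lemma bound_many_le_uniform (R : realFieldType) (x y : R) :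
  1 <= y -> y <= x -> 2 - 1 / y + (y - 1) / x <= 3 - 2 / y.
Proof.
move=> y_ge1 y_le_x.
have : (y - 1) / x <= (y - 1) / y.
  by apply: ler_cross_div; [lra | lra | apply: ler_wpM2l; lra].
have -> : (y - 1) / y = 1 - 1 / y by field; apply: lt0r_neq0; lra.
lra.
Qed.

(* When n <= m, (2n - 2)/m <= (2m - 2)/m, so the second bound is at most 3 - 2/m. *)
Lemma bound_few_le_uniform (R : realFieldType) (x y : R) :
  0 < y -> x <= y -> 1 + (2 * x - 2) / y <= 3 - 2 / y.
Proof.
move=> y_gt0 x_le_y.
have : (2 * x - 2) / y <= (2 * y - 2) / y by rewrite ler_pM2r ?invr_gt0; lra.
have -> : (2 * y - 2) / y = 2 - 2 / y by field; apply: lt0r_neq0.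
lra.
Qed.

Theorem corollary5 (R : realFieldType) (n m : nat) (G : rel 'I_n) :
  (0 < n)%N -> (0 < m)%N -> simple_graph G ->
  ((m <= n)%N ->
     @PoTA_le R n m G (2 - 1 / m%:R + (m%:R - 1) / n%:R : R)) /\
  ((n < m)%N ->
     @PoTA_le R n m G (1 + (2 * n%:R - 2) / m%:R : R)) /\
  @PoTA_le R n m G (3 - 2 / m%:R : R).
Proof.
move=> n_gt0 m_gt0 sG.
have x_ge1 : 1 <= n%:R :> R by rewrite ler1n.
have y_ge1 : 1 <= m%:R :> R by rewrite ler1n.
have many := relaxed_bound_many x_ge1 y_ge1.
have few := relaxed_bound_few x_ge1 y_ge1.
split; [by move=> _; exact: PoTA_le_of_relaxed | split].
  by move=> _; exact: PoTA_le_of_relaxed.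
apply: PoTA_le_of_relaxed => //.
have [le_mn | lt_nm] := leqP m n.
  apply: relaxed_ratio_bound_mono many.
  by apply: bound_many_le_uniform; rewrite // ler_nat.
apply: relaxed_ratio_bound_mono few.
by apply: bound_few_le_uniform; rewrite ?ltr0n // ler_nat ltnW.
Qed.
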